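(* A distribution $P^0\in L\cap\Delta^{n-1}_+$ is a minimal point of $L\cap\Delta^{n-1}_+$ with respect to the (global) Markov order $\succ_{P^*}$ (i.e. there is no $P^1\in L\cap\Delta^{n-1}_+$, $P^1\neq P^0$, with $P^0\succ_{P^*}P^1$) if and only if $\bigl(P^0+\mathbf{Q}(P^0,P^* )\bigr)\cap L=\{P^0\}$.
   Context: Fix $n\ge 2$ and a positive equilibrium distribution $P^*=(p^*_i)$, $p^*_i>0$, $\sum_i p^*_i=1$. Let $\Delta^{n-1}_+=\{P\in\mathbb{R}^n: p_i>0,\ \sum_i p_i=1\}$. A Markov chain with equilibrium $P^*$ is given by rate constants $q_{ij}\ge 0$ ($i\neq j$) satisfying $\sum_{j\ne i}q_{ij}p^*_j=\bigl(\sum_{j\ne i}q_{ji}\bigr)p^*_i$ for all $i$; its Kolmogorov equation is $\frac{dp_i}{dt}=\sum_{j\ne i}(q_{ij}p_j-q_{ji}p_i)$. Markov preorder: $P^0\succ^0_{P^*}P^1$ if for some Markov chain with equilibrium $P^*$ the solution of the Kolmogorov equation with $P(0)=P^0$ satisfies $P(1)=P^1$. The (global) Markov order $\succ_{P^*}$ is the closed transitive closure of $\succ^0_{P^*}$. For $i\neq j$ let $\gamma^{ji}$ be the vector with $\gamma^{ji}_j=-1$, $\gamma^{ji}_i=1$, other coordinates $0$; ${\rm cone}$ denotes non-negative linear combinations; ${\rm sign}$ is the three-valued sign function; $\mathbf{Q}(P,P^* )={\rm cone}\{\gamma^{ji}\,{\rm sign}(\tfrac{p_j}{p^*_j}-\tfrac{p_i}{p^*_i})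 : 1\le j<i\le n\}$. The condition manifold is $L=\{P:\ \sum_j m_{rj}p_j=M_r,\ r=0,\dots,k\}$ with $m_{0j}=1$, $M_0=1$, and $L\cap\Delta^{n-1}_+\ne\emptyset$. *)

(* real vectors in R^n are represented as functions nat -> R,
   only the coordinates 0..n-1 being meaningful. *)
From Stdlib Require Import Reals Arith.
Open Scope R_scope.

Fixpoint rsum (n : nat) (f : nat -> R) : R :=
  match n with
  | O => 0
  | S k => rsum k f + f k
  end.

Definition veq (n : nat) (x y : nat -> R) : Prop :=
  forall i, (i < n)%nat -> x i = y i.

Definition simplex_pos (n : nat) (P : nat -> R) : Prop :=
  (forall i, (i < n)%nat -> 0 < P i) /\ rsum n P = 1.

Definition rsum_ne (n i : nat) (f : nat -> R) : R :=
  rsum n (fun j => if Nat.eqb j i then 0 else f j).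

(* q i j (i <> j) is the rate constant q_{ij}; it is a Markov chain with
   equilibrium Ps *)
Definition markov_chain (n : nat) (Ps : nat -> R) (q : nat -> nat -> R) : Prop :=
  (forall i j, (i < n)%nat -> (j < n)%nat -> i <> j -> 0 <= q i j) /\
  (forall i, (i < n)%nat ->
     rsum_ne n i (fun j => q i j * Ps j) = rsum_ne n i (fun j => q j i) * Ps i).

Definition kolmogorov_rhs (n : nat) (q : nat -> nat -> R) (p : nat -> R) (i : nat) : R :=
  rsum_ne n i (fun j => q i j * p j - q j i * p i).

Definition kolmogorov_solution (n : nat) (q : nat -> nat -> R) (P : R -> nat -> R) : Prop :=
  forall i t, (i < n)%nat ->
    derivable_pt_lim (fun s => P s i) t (kolmogorov_rhs n q (P t) i).

(* Markov preorder  P0 >^0_{Ps} P1  (the solution of a linear ODE is unique,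
   so "some solution with P(0)=P0 has P(1)=P1" = "the solution ...") *)
Definition markov_pre (n : nat) (Ps : nat -> R) (P0 P1 : nat -> R) : Prop :=
  exists q : nat -> nat -> R, markov_chain n Ps q /\
  exists P : R -> nat -> R, kolmogorov_solution n q P /\
    veq n (P 0) P0 /\ veq n (P 1) P1.

Definition vconv (n : nat) (xs : nat -> nat -> R) (x : nat -> R) : Prop :=
  forall i, (i < n)%nat -> Un_cv (fun k => xs k i) (x i).

Definition rel_closed (n : nat) (Rl : (nat -> R) -> (nat -> R) -> Prop) : Prop :=
  forall (xs ys : nat -> nat -> R) (x y : nat -> R),
    (forall k, Rl (xs k) (ys k)) -> vconv n xs x -> vconv n ys y ->
    simplex_pos n x -> simplex_pos n y -> Rl x y.

Definition rel_trans (Rl : (nat -> R) -> (nat -> R) -> Prop) : Prop :=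
  forall x y z, Rl x y -> Rl y z -> Rl x z.

(* global Markov order: the smallest closed transitive relation containing
   the Markov preorder (the closed transitive closure) *)
Definition markov_order (n : nat) (Ps : nat -> R) (P0 P1 : nat -> R) : Prop :=
  forall Rl : (nat -> R) -> (nat -> R) -> Prop,
    rel_closed n Rl -> rel_trans Rl ->
    (forall x y, simplex_pos n x -> markov_pre n Ps x y -> Rl x y) ->
    Rl P0 P1.

Definition inL (n k : nat) (m : nat -> nat -> R) (M : nat -> R) (P : nat -> R) : Prop :=
  forall r, (r <= k)%nat -> rsum n (fun j => m r j * P j) = M r.

Definition sgn (x : R) : R :=
  if Rlt_dec 0 x then 1 else if Rlt_dec x 0 then -1 else 0.

Definition gamma (j i l : nat) : R :=
  (if Nat.eqb l i then 1 else 0) - (if Nat.eqb l j then 1 else 0).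

Definition in_P0_plus_Q (n : nat) (Ps P0 P : nat -> R) : Prop :=
  exists c : nat -> nat -> R,
    (forall j i, (j < i)%nat -> (i < n)%nat -> 0 <= c j i) /\
    forall l, (l < n)%nat ->
      P l = P0 l + rsum n (fun i => rsum i (fun j =>
              c j i * sgn (P0 j / Ps j - P0 i / Ps i) * gamma j i l)).

From Stdlib Require Import Reals Lra Lia Psatz Classical FunctionalExtensionality.
From Coquelicot Require Import Coquelicot.
Open Scope R_scope.

(* Write r = P0 / P* for the ratio coordinates of P0.  The proof has two halves.

   Near P0 every small cone move
   d sign(r_j - r_i) gamma^{ji} is realised exactly by an explicit two-state Markov
   chain, because it moves mass from the larger to the smaller ratio and the order of
   the ratios is stable near P0 (local_moves).  Chaining such moves with a budget on
   their total size (budgeted_cone), P0 precedes P0 + eps (P - P0) for any P in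
   P0 + Q and small eps > 0; if P is in L so is this point, so minimality gives P = P0.

   The functionals
   F_a(x) = sum_l max(x_l - a p*_l, 0) decrease along every Kolmogorov flow
   (dissipation inequality for a smooth convex approximation) and their common sublevel
   relation is closed and transitive, so P0 >_{P*} P1 implies F_a(P1) <= F_a(P0) for
   all a.  Testing at thresholds a = r_i shows that P1 - P0 puts no extra mass on any
   upper set of r ("downhill"), and a flow decomposition shows that downhill vectors
   lie in the cone Q.  Hence P1 is in (P0 + Q) and in L, so P1 = P0. *)

Lemma rsum_ext n f g : (forall k, (k < n)%nat -> f k = g k) -> rsum n f = rsum n g.
Proof.
  induction n as [|n IH]; intros H; simpl; [reflexivity|].
  rewrite IH by (intros; apply H; lia). now rewrite H by lia.
Qed.

Lemma rsum_plus n f g : rsum n (fun k => f k + g k) = rsum n f + rsum n g.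
Proof. induction n; simpl; [lra|]. rewrite IHn. lra. Qed.

Lemma rsum_minus n f g : rsum n (fun k => f k - g k) = rsum n f - rsum n g.
Proof. induction n; simpl; [lra|]. rewrite IHn. lra. Qed.

Lemma rsum_scal n c f : rsum n (fun k => c * f k) = c * rsum n f.
Proof. induction n; simpl; [lra|]. rewrite IHn. lra. Qed.

Lemma rsum_le n f g : (forall k, (k < n)%nat -> f k <= g k) -> rsum n f <= rsum n g.
Proof.
  induction n as [|n IH]; intros H; simpl; [lra|].
  apply Rplus_le_compat; [apply IH; intros; apply H|apply H]; lia.
Qed.

Lemma rsum_zero n f : (forall k, (k < n)%nat -> f k = 0) -> rsum n f = 0.
Proof.
  induction n as [|n IH]; intros H; simpl; [reflexivity|].
  rewrite IH by (intros; apply H; lia). rewrite H by lia. ring.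
Qed.

Lemma rsum_nonneg n f : (forall k, (k < n)%nat -> 0 <= f k) -> 0 <= rsum n f.
Proof. intros H. rewrite <- (rsum_zero n (fun _ => 0)) by auto. apply rsum_le; auto. Qed.

Lemma rsum_single n f b :
  (b < n)%nat -> (forall k, (k < n)%nat -> k <> b -> f k = 0) -> rsum n f = f b.
Proof.
  induction n as [|n IH]; intros Hb H; [lia|]. simpl.
  destruct (Nat.eq_dec b n) as [->|Hne].
  - rewrite rsum_zero by (intros; apply H; lia). ring.
  - rewrite IH; [rewrite (H n) by lia; ring|lia|intros; apply H; lia].
Qed.

Lemma rsum_indicator n b : (b < n)%nat -> rsum n (fun l => if Nat.eqb l b then 1 else 0) = 1.
Proof.
  intros Hb. rewrite (rsum_single n _ b Hb); [now rewrite Nat.eqb_refl|].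
  intros k _ Hk. now apply Nat.eqb_neq in Hk as ->.
Qed.

Lemma rsum_fubini n m (f : nat -> nat -> R) :
  rsum n (fun i => rsum m (fun j => f i j)) = rsum m (fun j => rsum n (fun i => f i j)).
Proof.
  induction n; simpl.
  - symmetry. now apply rsum_zero.
  - rewrite IHn, <- rsum_plus. reflexivity.
Qed.

Lemma rsum_neg_ex n f : rsum n f < 0 -> exists k, (k < n)%nat /\ f k < 0.
Proof.
  intros H. apply NNPP. intros Hno.
  assert (0 <= rsum n f); [|lra].
  apply rsum_nonneg. intros k Hk. apply Rnot_lt_le. intros Hf. apply Hno. eauto.
Qed.

Lemma rsum_ne_ext n i f g :
  (forall k, (k < n)%nat -> k <> i -> f k = g k) -> rsum_ne n i f = rsum_ne n i g.
Proof. intros H. apply rsum_ext. intros k Hk. destruct (Nat.eqb_spec k i); auto. Qed.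

Lemma rsum_ne_le n i f g :
  (forall k, (k < n)%nat -> k <> i -> f k <= g k) -> rsum_ne n i f <= rsum_ne n i g.
Proof. intros H. apply rsum_le. intros k Hk. destruct (Nat.eqb_spec k i); auto; lra. Qed.

Lemma rsum_ne_minus n i f g : rsum_ne n i (fun k => f k - g k) = rsum_ne n i f - rsum_ne n i g.
Proof. unfold rsum_ne. rewrite <- rsum_minus. apply rsum_ext. intros. destruct (Nat.eqb k i); lra. Qed.

Lemma rsum_ne_scal n i c f : rsum_ne n i (fun k => c * f k) = c * rsum_ne n i f.
Proof. unfold rsum_ne. rewrite <- rsum_scal. apply rsum_ext. intros. destruct (Nat.eqb k i); lra. Qed.

Lemma rsum_ne_single n i f b :
  (b < n)%nat -> b <> i -> (forall k, (k < n)%nat -> k <> b -> k <> i -> f k = 0) ->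
  rsum_ne n i f = f b.
Proof.
  intros Hb Hbi H. unfold rsum_ne. rewrite (rsum_single n _ b Hb).
  - destruct (Nat.eqb_spec b i); congruence.
  - intros k Hk Hkb. destruct (Nat.eqb_spec k i); auto.
Qed.

Lemma rsum_ne_zero n i f : (forall k, (k < n)%nat -> k <> i -> f k = 0) -> rsum_ne n i f = 0.
Proof. intros H. apply rsum_zero. intros k Hk. destruct (Nat.eqb_spec k i); auto. Qed.

Lemma rsum_ne_swap n (f : nat -> nat -> R) :
  rsum n (fun l => rsum_ne n l (fun j => f l j)) = rsum n (fun j => rsum_ne n j (fun l => f l j)).
Proof.
  unfold rsum_ne. rewrite rsum_fubini. apply rsum_ext. intros j _. apply rsum_ext. intros l _.
  now rewrite Nat.eqb_sym.
Qed.

Lemma argmax_ex n (P : nat -> Prop) (f : nat -> R) :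
  (exists k, (k < n)%nat /\ P k) ->
  exists k, (k < n)%nat /\ P k /\ forall j, (j < n)%nat -> P j -> f j <= f k.
Proof.
  induction n as [|n IH]; intros [k [Hk HP]]; [lia|].
  destruct (classic (exists k, (k < n)%nat /\ P k)) as [E|E].
  - destruct (IH E) as [m [Hm [HPm Hmax]]].
    destruct (classic (P n /\ f m < f n)) as [[HPn Hlt]|Hn].
    + exists n. repeat split; auto. intros j Hj HPj.
      destruct (Nat.eq_dec j n) as [->|]; [lra|]. specialize (Hmax j ltac:(lia) HPj). lra.
    + exists m. repeat split; auto. intros j Hj HPj.
      destruct (Nat.eq_dec j n) as [->|]; [|apply Hmax; auto; lia].
      apply Rnot_lt_le. intros Hlt. apply Hn. auto.
  - assert (k = n) as ->.
    { destruct (Nat.eq_dec k n); auto. exfalso. apply E. exists k. split; auto; lia. }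
    exists n. repeat split; auto. intros j Hj HPj.
    destruct (Nat.eq_dec j n) as [->|]; [lra|]. exfalso. apply E. exists j. split; auto; lia.
Qed.

Lemma gamma_sum n j i : (j < n)%nat -> (i < n)%nat -> rsum n (gamma j i) = 0.
Proof. intros Hj Hi. unfold gamma. rewrite rsum_minus, !rsum_indicator by auto. ring. Qed.

Lemma gamma_swap j i l : gamma i j l = - gamma j i l.
Proof. unfold gamma. ring. Qed.

Lemma sgn_pos x : 0 < x -> sgn x = 1.
Proof. unfold sgn. intros. destruct (Rlt_dec 0 x); [auto|lra]. Qed.

Lemma sgn_neg x : x < 0 -> sgn x = -1.
Proof. unfold sgn. intros. destruct (Rlt_dec 0 x); [lra|]. destruct (Rlt_dec x 0); [auto|lra]. Qed.

Lemma sgn_zero x : ~ 0 < x -> ~ x < 0 -> sgn x = 0.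
Proof. unfold sgn. intros. destruct (Rlt_dec 0 x); [contradiction|]. destruct (Rlt_dec x 0); [contradiction|auto]. Qed.

Definition ratio (Ps P : nat -> R) (l : nat) : R := P l / Ps l.

(* The cone Q of the paper, for a ratio vector r (r_l = p_l / p*_l): non-negative
   combinations of the moves sign(r_j - r_i) gamma^{ji}, each transporting mass
   from the larger to the smaller ratio. *)
Definition in_cone (n : nat) (r v : nat -> R) : Prop :=
  exists c : nat -> nat -> R,
    (forall j i, (j < i)%nat -> (i < n)%nat -> 0 <= c j i) /\
    forall l, (l < n)%nat ->
      v l = rsum n (fun i => rsum i (fun j => c j i * sgn (r j - r i) * gamma j i l)).

Lemma in_cone_ext n r v w : (forall l, (l < n)%nat -> v l = w l) -> in_cone n r w -> in_cone n r v.
Proof. intros H [c [Hc Hw]]. exists c. split; auto. intros l Hl. rewrite H by auto. auto. Qed.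

Lemma in_cone_zero n r : in_cone n r (fun _ => 0).
Proof.
  exists (fun _ _ => 0). split; [intros; lra|]. intros l Hl.
  symmetry. apply rsum_zero. intros. apply rsum_zero. intros. ring.
Qed.

Lemma in_cone_plus n r v w : in_cone n r v -> in_cone n r w -> in_cone n r (fun l => v l + w l).
Proof.
  intros [c [Hc Hv]] [d [Hd Hw]]. exists (fun j i => c j i + d j i). split.
  - intros j i H1 H2. specialize (Hc j i H1 H2). specialize (Hd j i H1 H2). lra.
  - intros l Hl. rewrite Hv, Hw, <- rsum_plus by auto. apply rsum_ext. intros i _.
    rewrite <- rsum_plus. apply rsum_ext. intros j _. ring.
Qed.

Lemma in_cone_transfer n r s t d :
  (s < n)%nat -> (t < n)%nat -> r t < r s -> 0 <= d -> in_cone n r (fun l => d * gamma s t l).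
Proof.
  intros Hs Ht Hr Hd.
  assert (Hst : s <> t) by (intros ->; lra).
  set (j0 := Nat.min s t). set (i0 := Nat.max s t).
  exists (fun j i => if (Nat.eqb j j0 && Nat.eqb i i0)%bool then d else 0). split.
  - intros j i _ _. destruct (Nat.eqb j j0 && Nat.eqb i i0)%bool; lra.
  - intros l Hl. rewrite (rsum_single n _ i0) by
      (unfold i0; lia || (intros i _ Hi; apply rsum_zero; intros j _;
       apply Nat.eqb_neq in Hi; rewrite Hi, Bool.andb_false_r; ring)).
    rewrite (rsum_single i0 _ j0) by
      (unfold i0, j0; lia || (intros j _ Hj; apply Nat.eqb_neq in Hj; rewrite Hj; simpl; ring)).
    rewrite !Nat.eqb_refl. simpl. unfold j0, i0.
    destruct (Nat.le_gt_cases s t).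
    + rewrite Nat.min_l, Nat.max_r, sgn_pos by lra || lia. ring.
    + rewrite Nat.min_r, Nat.max_l, sgn_neg, gamma_swap by lra || lia. ring.
Qed.

Definition upper_set (n : nat) (r : nat -> R) (U : nat -> bool) : Prop :=
  forall i j, (i < n)%nat -> (j < n)%nat -> U i = true -> r i < r j -> U j = true.

Definition sum_on (n : nat) (U : nat -> bool) (v : nat -> R) : R :=
  rsum n (fun l => if U l then v l else 0).

(* A mass change v is downhill for r if it conserves total mass and never
   increases the mass of an upper set of r.  This is exactly membership in the
   cone (flow decomposition below). *)
Definition downhill (n : nat) (r v : nat -> R) : Prop :=
  rsum n v = 0 /\ forall U, upper_set n r U -> sum_on n U v <= 0.

Definition add_point (U : nat -> bool) (t : nat) : nat -> bool := fun l => (U l || Nat.eqb l t)%bool.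

Lemma sum_on_add_point n U v t :
  (t < n)%nat -> U t = false -> sum_on n (add_point U t) v = sum_on n U v + v t.
Proof.
  intros Ht HUt. unfold sum_on, add_point.
  rewrite <- (Rmult_1_r (v t)), <- (rsum_indicator n t Ht), <- rsum_scal, <- rsum_plus.
  apply rsum_ext. intros l _. destruct (Nat.eqb_spec l t) as [->|]; rewrite ?HUt; simpl.
  - ring.
  - rewrite Bool.orb_false_r. destruct (U l); ring.
Qed.

Lemma sum_on_indicator n U b :
  (b < n)%nat -> sum_on n U (fun l => if Nat.eqb l b then 1 else 0) = if U b then 1 else 0.
Proof.
  intros Hb. unfold sum_on. rewrite (rsum_single n _ b Hb).
  - now rewrite Nat.eqb_refl.
  - intros k _ Hk. apply Nat.eqb_neq in Hk as ->. now destruct (U k).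
Qed.

Lemma sum_on_transfer n U v d s t : (s < n)%nat -> (t < n)%nat ->
  sum_on n U (fun l => v l - d * gamma s t l)
  = sum_on n U v - d * ((if U t then 1 else 0) - (if U s then 1 else 0)).
Proof.
  intros Hs Ht. rewrite <- (sum_on_indicator n U t), <- (sum_on_indicator n U s) by auto.
  unfold sum_on, gamma.
  rewrite <- rsum_minus, <- rsum_scal, <- rsum_minus.
  apply rsum_ext. intros l _. destruct (U l); ring.
Qed.

Lemma sum_on_le_point n U v s : (s < n)%nat -> U s = true ->
  (forall l, (l < n)%nat -> U l = true -> l <> s -> v l <= 0) -> sum_on n U v <= v s.
Proof.
  intros Hs HUs H. unfold sum_on.
  rewrite <- (Rmult_1_r (v s)), <- (rsum_indicator n s Hs), <- rsum_scal.
  apply rsum_le. intros l Hl. destruct (Nat.eqb_spec l s) as [->|Hne]; rewrite ?HUs; [lra|].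
  destruct (U l) eqn:HU; [|lra]. rewrite Rmult_0_r. auto.
Qed.

Lemma downhill_pair n r v :
  downhill n r v -> (exists l, (l < n)%nat /\ v l <> 0) ->
  exists t s, (t < n)%nat /\ (s < n)%nat /\ 0 < v t /\ v s < 0 /\ r t < r s /\
    forall l, (l < n)%nat -> 0 < v l -> r l <= r t.
Proof.
  intros [Hsum Hup] [l0 [Hl0 Hv0]].
  assert (Hpos : exists l, (l < n)%nat /\ 0 < v l).
  { apply NNPP. intros Hno.
    assert (Hle : forall l, (l < n)%nat -> v l <= 0).
    { intros l Hl. apply Rnot_lt_le. intros Hv. apply Hno. eauto. }
    assert (rsum n v < 0); [|lra].
    apply Rle_lt_trans with (rsum n (fun l => if Nat.eqb l l0 then v l0 else 0)).
    - apply rsum_le. intros l Hl. destruct (Nat.eqb_spec l l0) as [->|]; [lra|auto].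
    - rewrite (rsum_single n _ l0 Hl0), Nat.eqb_refl.
      + specialize (Hle l0 Hl0). lra.
      + intros k _ Hk. now apply Nat.eqb_neq in Hk as ->. }
  destruct (argmax_ex n (fun l => 0 < v l) r Hpos) as [t [Ht [Hvt Htmax]]].
  set (above := fun l => if Rlt_dec (r t) (r l) then true else false).
  assert (Habove_t : above t = false) by (unfold above; destruct (Rlt_dec (r t) (r t)); lra || auto).
  assert (Hup0 : upper_set n r (add_point above t)).
  { intros i j _ _ Hi Hij. unfold add_point, above in *.
    destruct (Rlt_dec (r t) (r j)); [auto|]. exfalso.
    destruct (Rlt_dec (r t) (r i)); [lra|]. simpl in Hi. apply Nat.eqb_eq in Hi as ->. contradiction. }
  specialize (Hup _ Hup0). rewrite sum_on_add_point in Hup by auto.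
  destruct (rsum_neg_ex n (fun l => if above l then v l else 0)) as [s [Hs Hvs]].
  { fold (sum_on n above v). lra. }
  unfold above in Hvs. destruct (Rlt_dec (r t) (r s)); [|lra].
  exists t, s. repeat split; auto.
Qed.

Lemma downhill_transfer n r v t s d :
  downhill n r v -> (t < n)%nat -> (s < n)%nat -> r t < r s ->
  (forall l, (l < n)%nat -> 0 < v l -> r l <= r t) -> 0 <= d -> d <= v t -> d <= - v s ->
  downhill n r (fun l => v l - d * gamma s t l).
Proof.
  intros [Hsum Hup] Ht Hs Hrts Htmax Hd Hdt Hds. split.
  - rewrite rsum_minus, rsum_scal, gamma_sum, Hsum by auto. ring.
  - intros U HU. rewrite sum_on_transfer by auto. specialize (Hup U HU) as HUv.
    destruct (U t) eqn:HUt, (U s) eqn:HUs; try lra.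
    destruct (classic (exists l, (l < n)%nat /\ U l = true /\ r l <= r t))
      as [[l0 [Hl0 [HUl0 Hrl0]]]|Hno].
    + assert (Hup' : upper_set n r (add_point U t)).
      { intros i j Hi Hj Hui Hij. unfold add_point in *.
        destruct (U i) eqn:HUi.
        - now rewrite (HU i j Hi Hj HUi Hij).
        - simpl in Hui. apply Nat.eqb_eq in Hui as ->.
          now rewrite (HU l0 j Hl0 Hj HUl0 ltac:(lra)). }
      specialize (Hup _ Hup'). rewrite sum_on_add_point in Hup by auto. lra.
    + assert (sum_on n U v <= v s); [|lra].
      apply sum_on_le_point; auto. intros l Hl HUl _.
      apply Rnot_lt_le. intros Hvl. apply Hno. exists l. auto.
Qed.

(* Number of non-zero coordinates: the termination measure of the flow decomposition. *)
Fixpoint count_nonzero (n : nat) (v : nat -> R) : nat :=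
  match n with
  | O => O
  | S k => (count_nonzero k v + if Req_EM_T (v k) 0 then 0 else 1)%nat
  end.

Lemma count_nonzero_lt n v w :
  (forall l, (l < n)%nat -> w l <> 0 -> v l <> 0) ->
  (exists l, (l < n)%nat /\ v l <> 0 /\ w l = 0) -> (count_nonzero n w < count_nonzero n v)%nat.
Proof.
  induction n as [|n IH]; intros Hsupp [l [Hl [Hvl Hwl]]]; [lia|]. simpl.
  assert (Hle : forall m, (m <= n)%nat -> (count_nonzero m w <= count_nonzero m v)%nat).
  { induction m as [|m IHm]; intros Hm; simpl; [lia|]. specialize (IHm ltac:(lia)).
    destruct (Req_EM_T (w m) 0), (Req_EM_T (v m) 0); try lia.
    exfalso. apply (Hsupp m); auto; lia. }
  destruct (Nat.eq_dec l n) as [->|Hne].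
  - specialize (Hle n (le_n n)).
    destruct (Req_EM_T (w n) 0), (Req_EM_T (v n) 0); try lia; contradiction.
  - assert (count_nonzero n w < count_nonzero n v)%nat.
    { apply IH; [intros; apply Hsupp; auto; lia|exists l; repeat split; auto; lia]. }
    destruct (Req_EM_T (w n) 0), (Req_EM_T (v n) 0); try lia.
    exfalso. apply (Hsupp n); auto; lia.
Qed.

(* Flow decomposition: every downhill vector lies in the cone.  Repeatedly cancel a
   positive entry of maximal ratio against a negative entry of larger ratio. *)
Lemma downhill_in_cone n r v : downhill n r v -> in_cone n r v.
Proof.
  assert (Main : forall N v, (count_nonzero n v < N)%nat -> downhill n r v -> in_cone n r v).
  { induction N as [|N IH]; intros w HN Hw; [lia|].
    destruct (classic (exists l, (l < n)%nat /\ w l <> 0)) as [Hnz|Hz].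
    2:{ apply in_cone_ext with (fun _ => 0); [|apply in_cone_zero].
        intros l Hl. apply NNPP. intros Hwl. apply Hz. eauto. }
    destruct (downhill_pair n r w Hw Hnz) as [t [s [Ht [Hs [Hwt [Hws [Hrts Htmax]]]]]]].
    assert (Hst : s <> t) by (intros ->; lra).
    set (d := Rmin (w t) (- w s)).
    assert (Hd : 0 <= d) by (apply Rmin_glb; lra).
    assert (Hdt : d <= w t) by apply Rmin_l.
    assert (Hds : d <= - w s) by apply Rmin_r.
    set (w' := fun l => w l - d * gamma s t l).
    apply in_cone_ext with (fun l => w' l + d * gamma s t l); [intros; unfold w'; ring|].
    apply in_cone_plus; [|apply in_cone_transfer; auto].
    apply IH; [|apply downhill_transfer; auto].
    assert (count_nonzero n w' < count_nonzero n w)%nat; [|lia].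
    apply count_nonzero_lt.
    - intros l Hl Hw'l. unfold w', gamma in Hw'l.
      destruct (Nat.eqb_spec l t) as [->|]; [lra|]. destruct (Nat.eqb_spec l s) as [->|]; [lra|].
      intros Hwl. apply Hw'l. rewrite Hwl. ring.
    - unfold w', gamma, d. destruct (Rle_dec (w t) (- w s)).
      + exists t. rewrite Nat.eqb_refl. destruct (Nat.eqb_spec t s); [congruence|].
        rewrite Rmin_left by lra. repeat split; auto; lra.
      + exists s. rewrite Nat.eqb_refl. destruct (Nat.eqb_spec s t); [congruence|].
        rewrite Rmin_right by lra. repeat split; auto; lra. }
  intros Hv. exact (Main _ v (Nat.lt_succ_diag_r _) Hv).
Qed.

(* Smooth convex approximation of u |-> max(u - a, 0), uniformly within e/2. *)
Definition softplus (a e u : R) : R := (sqrt ((u - a) * (u - a) + e * e) + (u - a)) / 2.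
Definition softplus_slope (a e u : R) : R :=
  ((u - a) / sqrt ((u - a) * (u - a) + e * e) + 1) / 2.

Lemma softplus_radicand_pos a e u : 0 < e -> 0 < (u - a) * (u - a) + e * e.
Proof.
  intros He. apply Rplus_le_lt_0_compat; [apply Rle_0_sqr|apply Rmult_lt_0_compat; auto].
Qed.

Lemma softplus_derivative a e u : 0 < e -> derivable_pt_lim (softplus a e) u (softplus_slope a e u).
Proof.
  intros He. apply is_derive_Reals. unfold softplus, softplus_slope. auto_derive.
  - apply softplus_radicand_pos, He.
  - replace (u + - a) with (u - a) by ring.
    assert (0 < sqrt ((u - a) * (u - a) + e * e))
      by (apply sqrt_lt_R0, softplus_radicand_pos, He).
    field. lra.
Qed.

Lemma softplus_tangent a e u w :
  0 < e -> softplus_slope a e u * (w - u) <= softplus a e w - softplus a e u.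
Proof.
  intros He. unfold softplus, softplus_slope.
  set (X := u - a). set (Y := w - a).
  set (A := sqrt (X * X + e * e)). set (B := sqrt (Y * Y + e * e)).
  assert (A2 : A * A = X * X + e * e) by (apply sqrt_sqrt; nra).
  assert (B2 : B * B = Y * Y + e * e) by (apply sqrt_sqrt; nra).
  assert (Ap : 0 < A) by (apply sqrt_lt_R0; nra).
  assert (Bp : 0 < B) by (apply sqrt_lt_R0; nra).
  replace (w - u) with (Y - X) by (unfold X, Y; ring).
  (* Cauchy-Schwarz for the vectors (X, e) and (Y, e) *)
  assert (Key : X * Y + e * e <= A * B).
  { destruct (Rle_dec (X * Y + e * e) 0); [nra|].
    apply Rsqr_incr_0_var; [|nra]. unfold Rsqr.
    replace (A * B * (A * B)) with (A * A * (B * B)) by ring. rewrite A2, B2.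
    assert (0 <= e * e * ((X - Y) * (X - Y))) by (apply Rmult_le_pos; apply Rle_0_sqr). nra. }
  assert (X / A * (Y - X) <= B - A).
  { apply Rmult_le_reg_l with A; auto.
    replace (A * (X / A * (Y - X))) with (X * (Y - X)) by (field; lra). nra. }
  lra.
Qed.

Lemma softplus_bounds a e u : 0 < e -> 0 <= softplus a e u - Rmax (u - a) 0 <= e / 2.
Proof.
  intros He. unfold softplus. set (X := u - a).
  set (A := sqrt (X * X + e * e)).
  assert (A2 : A * A = X * X + e * e) by (apply sqrt_sqrt; nra).
  assert (Ap : 0 <= A) by apply sqrt_pos.
  assert (H1 : Rabs X <= A).
  { apply Rsqr_incr_0_var; [|auto]. unfold Rsqr. rewrite A2, <- Rabs_mult, Rabs_right; nra. }
  assert (H2 : A <= Rabs X + e).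
  { pose proof (Rabs_pos X).
    apply Rsqr_incr_0_var; [|lra]. unfold Rsqr. rewrite A2.
    assert (Rabs X * Rabs X = X * X) by (rewrite <- Rabs_mult, Rabs_right; nra). nra. }
  unfold Rmax. destruct (Rle_dec X 0).
  - rewrite Rabs_left1 in H1, H2 by auto. lra.
  - rewrite Rabs_right in H1, H2 by lra. lra.
Qed.

Lemma kolmogorov_rhs_sum n q p : rsum n (kolmogorov_rhs n q p) = 0.
Proof.
  unfold kolmogorov_rhs.
  rewrite (rsum_ext n _ (fun l => rsum_ne n l (fun j => q l j * p j) - rsum_ne n l (fun j => q j l * p l)))
    by (intros; apply rsum_ne_minus).
  rewrite rsum_minus, (rsum_ne_swap n (fun l j => q l j * p j)). ring.
Qed.

Lemma kolmogorov_rhs_balanced n Ps q x l : markov_chain n Ps q -> (l < n)%nat ->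
  kolmogorov_rhs n q (fun j => Ps j * x j) l = rsum_ne n l (fun j => q l j * Ps j * (x j - x l)).
Proof.
  intros [_ Hbal] Hl. unfold kolmogorov_rhs.
  rewrite (rsum_ne_ext n l _ (fun j => q l j * Ps j * x j - Ps l * x l * q j l)) by (intros; ring).
  rewrite (rsum_ne_ext n l (fun j => _ * (_ - _)) (fun j => q l j * Ps j * x j - x l * (q l j * Ps j)))
    by (intros; ring).
  rewrite !rsum_ne_minus, !rsum_ne_scal, Hbal by auto. ring.
Qed.

(* Dissipation inequality: for a convex phi with slope dphi, the time derivative
   sum_l dphi(x_l) (dp_l/dt) of the phi-divergence sum_l p*_l phi(x_l), x_l = p_l / p*_l,
   is non-positive along the Kolmogorov flow. *)
Lemma dissipation n Ps q x (phi dphi : R -> R) :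
  (forall l, (l < n)%nat -> 0 < Ps l) -> markov_chain n Ps q ->
  (forall u w, dphi u * (w - u) <= phi w - phi u) ->
  rsum n (fun l => dphi (x l) * kolmogorov_rhs n q (fun j => Ps j * x j) l) <= 0.
Proof.
  intros HPs Hq Htan.
  rewrite <- (kolmogorov_rhs_sum n q (fun j => Ps j * phi (x j))).
  apply rsum_le. intros l Hl.
  rewrite (kolmogorov_rhs_balanced n Ps q x), (kolmogorov_rhs_balanced n Ps q (fun j => phi (x j)))
    by auto.
  rewrite <- rsum_ne_scal. apply rsum_ne_le. intros j Hj Hjl.
  assert (Hw : 0 <= q l j * Ps j)
    by (apply Rmult_le_pos; [apply (proj1 Hq); auto|left; auto]).
  specialize (Htan (x l) (x j)).
  replace (dphi (x l) * (q l j * Ps j * (x j - x l)))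
    with (q l j * Ps j * (dphi (x l) * (x j - x l))) by ring.
  apply Rmult_le_compat_l; auto.
Qed.

Lemma rsum_derivable n (f : R -> nat -> R) (d : nat -> R) t :
  (forall l, (l < n)%nat -> derivable_pt_lim (fun s => f s l) t (d l)) ->
  derivable_pt_lim (fun s => rsum n (f s)) t (rsum n d).
Proof.
  induction n as [|n IH]; intros H; simpl.
  - apply derivable_pt_lim_const.
  - apply (derivable_pt_lim_plus (fun s => rsum n (f s)) (fun s => f s n)).
    + apply IH. intros. apply H. lia.
    + apply H. lia.
Qed.

Lemma nonincreasing_01 (f df : R -> R) :
  (forall t, derivable_pt_lim f t (df t)) -> (forall t, df t <= 0) -> f 1 <= f 0.
Proof.
  intros Hd Hneg.
  pose (pr := fun t => exist (fun d => derivable_pt_lim f t d) (df t) (Hd t) : derivable_pt f t).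
  apply (nonpos_derivative_1 f pr); [|lra]. intros t. apply Hneg.
Qed.

(* The excess functionals F_a(x) = sum_l max(x_l - a p*_l, 0): Lyapunov functions of
   every Markov chain with equilibrium p*. *)
Definition excess (n : nat) (Ps : nat -> R) (a : R) (x : nat -> R) : R :=
  rsum n (fun l => Rmax (x l - a * Ps l) 0).

Lemma Rmax0_scal c w : 0 < c -> Rmax (c * w) 0 = c * Rmax w 0.
Proof. intros Hc. unfold Rmax. destruct (Rle_dec (c * w) 0), (Rle_dec w 0); nra. Qed.

Definition smoothed_excess (n : nat) (Ps : nat -> R) (a e : R) (x : nat -> R) : R :=
  rsum n (fun l => Ps l * softplus a e (x l / Ps l)).

Lemma smoothed_excess_bounds n Ps a e x : (forall l, (l < n)%nat -> 0 < Ps l) -> 0 < e ->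
  excess n Ps a x <= smoothed_excess n Ps a e x <= excess n Ps a x + e / 2 * rsum n Ps.
Proof.
  intros HPs He. unfold excess, smoothed_excess.
  assert (Hterm : forall l, (l < n)%nat ->
    0 <= Ps l * softplus a e (x l / Ps l) - Rmax (x l - a * Ps l) 0 <= e / 2 * Ps l).
  { intros l Hl. specialize (HPs l Hl).
    replace (x l - a * Ps l) with (Ps l * (x l / Ps l - a)) by (field; lra).
    rewrite Rmax0_scal by lra. pose proof (softplus_bounds a e (x l / Ps l) He). nra. }
  split.
  - apply rsum_le. intros l Hl. specialize (Hterm l Hl). lra.
  - rewrite <- rsum_scal, <- rsum_plus. apply rsum_le. intros l Hl. specialize (Hterm l Hl). lra.
Qed.

Lemma smoothed_excess_flow n Ps q P a e :
  (forall l, (l < n)%nat -> 0 < Ps l) -> markov_chain n Ps q -> kolmogorov_solution n q P -> 0 < e ->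
  smoothed_excess n Ps a e (P 1) <= smoothed_excess n Ps a e (P 0).
Proof.
  intros HPs Hq HP He.
  apply (nonincreasing_01 (fun t => smoothed_excess n Ps a e (P t))
    (fun t => rsum n (fun l => softplus_slope a e (P t l / Ps l) * kolmogorov_rhs n q (P t) l))).
  - intros t. apply rsum_derivable. intros l Hl.
    assert (Hp := HPs l Hl).
    replace (softplus_slope a e (P t l / Ps l) * kolmogorov_rhs n q (P t) l)
      with (Ps l * (softplus_slope a e (P t l / Ps l) * (/ Ps l * kolmogorov_rhs n q (P t) l)))
      by (field; lra).
    apply derivable_pt_lim_scal.
    apply (derivable_pt_lim_comp (fun s => P s l / Ps l) (softplus a e)); [|apply softplus_derivative, He].
    replace (fun s => P s l / Ps l) with (fun s => / Ps l * P s l)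
      by (apply functional_extensionality; intros; unfold Rdiv; ring).
    apply derivable_pt_lim_scal, HP, Hl.
  - intros t.
    assert (Hsame : forall l, (l < n)%nat -> kolmogorov_rhs n q (P t) l
                      = kolmogorov_rhs n q (fun j => Ps j * (P t j / Ps j)) l).
    { intros l Hl. apply rsum_ne_ext. intros j Hj _.
      assert (0 < Ps j) by auto. assert (0 < Ps l) by auto. field. split; lra. }
    rewrite (rsum_ext n _ (fun l => softplus_slope a e (P t l / Ps l)
                                  * kolmogorov_rhs n q (fun j => Ps j * (P t j / Ps j)) l))
      by (intros; rewrite Hsame; auto).
    apply (dissipation n Ps q _ (softplus a e)); auto. intros. apply softplus_tangent, He.
Qed.

Lemma excess_ext n Ps a x y : veq n x y -> excess n Ps a x = excess n Ps a y.
Proof. intros H. apply rsum_ext. intros l Hl. now rewrite H. Qed.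

(* F_a decreases along every elementary Markov step: the smoothed functional decreases
   along the flow and is within e/2 of F_a for every e > 0. *)
Lemma excess_markov_pre n Ps x y a :
  simplex_pos n Ps -> markov_pre n Ps x y -> excess n Ps a y <= excess n Ps a x.
Proof.
  intros [HPs HPs1] [q [Hq [P [HP [H0 H1]]]]].
  rewrite <- (excess_ext n Ps a (P 1) y H1), <- (excess_ext n Ps a (P 0) x H0).
  apply Rnot_lt_le. intros Hgap.
  set (e := excess n Ps a (P 1) - excess n Ps a (P 0)).
  assert (He : 0 < e) by (unfold e; lra).
  pose proof (smoothed_excess_bounds n Ps a e (P 1) HPs He).
  pose proof (smoothed_excess_bounds n Ps a e (P 0) HPs He).
  pose proof (smoothed_excess_flow n Ps q P a e HPs Hq HP He).
  rewrite HPs1 in *. unfold e in *. lra.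
Qed.

Lemma cv_const c : Un_cv (fun _ => c) c.
Proof. intros eps Heps. exists 0%nat. intros. unfold R_dist. rewrite Rminus_diag, Rabs_R0. auto. Qed.

Lemma cv_rmax0 u l : Un_cv u l -> Un_cv (fun k => Rmax (u k) 0) (Rmax l 0).
Proof.
  intros H eps Heps. destruct (H eps Heps) as [N HN]. exists N. intros k Hk.
  specialize (HN k Hk). unfold R_dist in *.
  eapply Rle_lt_trans; [|exact HN].
  unfold Rmax. destruct (Rle_dec (u k) 0), (Rle_dec l 0); unfold Rabs; repeat destruct Rcase_abs; lra.
Qed.

Lemma cv_rsum n (f : nat -> nat -> R) (g : nat -> R) :
  (forall i, (i < n)%nat -> Un_cv (fun k => f k i) (g i)) -> Un_cv (fun k => rsum n (f k)) (rsum n g).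
Proof.
  induction n as [|n IH]; intros H; simpl; [apply cv_const|].
  apply (CV_plus (fun k => rsum n (f k)) (fun k => f k n)); [apply IH; intros|]; apply H; lia.
Qed.

Lemma excess_continuous n Ps a xs x :
  vconv n xs x -> Un_cv (fun k => excess n Ps a (xs k)) (excess n Ps a x).
Proof.
  intros H. apply (cv_rsum n (fun k l => Rmax (xs k l - a * Ps l) 0)). intros l Hl.
  apply (cv_rmax0 (fun k => xs k l - a * Ps l)).
  apply (CV_minus (fun k => xs k l) (fun _ => a * Ps l)); [apply H, Hl|apply cv_const].
Qed.

(* Domination of all the excess functionals is a closed transitive relation containing
   the Markov preorder, hence it contains the global Markov order. *)
Definition excess_dominated (n : nat) (Ps x y : nat -> R) : Prop :=
  forall a, excess n Ps a y <= excess n Ps a x.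

Lemma markov_order_excess n Ps x y :
  simplex_pos n Ps -> markov_order n Ps x y -> excess_dominated n Ps x y.
Proof.
  intros HPs Hxy. apply Hxy.
  - intros xs ys x' y' H Hx Hy _ _ a.
    apply (@Rle_cv_lim (fun k => excess n Ps a (ys k)) (fun k => excess n Ps a (xs k)));
      [intros; apply H|apply excess_continuous; auto|apply excess_continuous; auto].
  - intros u v w Huv Hvw a. specialize (Huv a). specialize (Hvw a). lra.
  - intros u v _ Huv a. apply (excess_markov_pre n Ps u v a HPs Huv).
Qed.

(* Testing F_a at the threshold a = min_{l in U} p0_l / p*_l shows that a dominated
   distribution never has more mass than P0 on an upper set of the ratios of P0. *)
Lemma excess_dominated_downhill n Ps P0 P1 :
  simplex_pos n Ps -> rsum n P0 = 1 -> rsum n P1 = 1 -> excess_dominated n Ps P0 P1 ->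
  downhill n (ratio Ps P0) (fun l => P1 l - P0 l).
Proof.
  intros [HPs _] HP0 HP1 Hdom. split; [rewrite rsum_minus, HP0, HP1; ring|].
  intros U HU. set (r := ratio Ps P0) in *.
  destruct (classic (exists l, (l < n)%nat /\ U l = true)) as [Hne|Hempty].
  2:{ right. apply rsum_zero. intros l Hl. destruct (U l) eqn:HUl; auto.
      exfalso. apply Hempty. eauto. }
  destruct (argmax_ex n (fun l => U l = true) (fun l => - r l) Hne) as [i0 [Hi0 [HUi0 Hmin]]].
  set (a := r i0). specialize (Hdom a).
  assert (E0 : excess n Ps a P0 = sum_on n U (fun l => P0 l - a * Ps l)).
  { apply rsum_ext. intros l Hl. assert (Hp := HPs l Hl).
    assert (HP0l : P0 l = Ps l * r l) by (unfold r, ratio; field; lra).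
    destruct (U l) eqn:HUl.
    - apply Rmax_left. specialize (Hmin l Hl HUl). fold a in Hmin. nra.
    - apply Rmax_right. apply Rnot_lt_le. intros Hlt.
      assert (U l = true); [|congruence]. apply (HU i0 l); auto. fold a. nra. }
  assert (E1 : sum_on n U (fun l => P1 l - a * Ps l) <= excess n Ps a P1).
  { apply rsum_le. intros l _. destruct (U l); [apply Rmax_l|apply Rmax_r]. }
  assert (E2 : sum_on n U (fun l => P1 l - P0 l)
               = sum_on n U (fun l => P1 l - a * Ps l) - sum_on n U (fun l => P0 l - a * Ps l)).
  { unfold sum_on. rewrite <- rsum_minus. apply rsum_ext. intros l _. destruct (U l); ring. }
  lra.
Qed.

Lemma markov_order_of_pre n Ps x y : simplex_pos n x -> markov_pre n Ps x y -> markov_order n Ps x y.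
Proof. intros Hx Hxy Rl _ _ Hpre. now apply Hpre. Qed.

Lemma markov_order_trans n Ps x y z :
  markov_order n Ps x y -> markov_order n Ps y z -> markov_order n Ps x z.
Proof. intros Hxy Hyz Rl Hc Ht Hpre. apply (Ht x y z); [apply Hxy|apply Hyz]; auto. Qed.

Lemma markov_order_ext n Ps x y y' :
  markov_order n Ps x y -> (forall l, y l = y' l) -> markov_order n Ps x y'.
Proof. intros H E. replace y' with y; auto. now apply functional_extensionality. Qed.

(* The chain with all rates zero keeps every distribution fixed. *)
Lemma markov_order_refl n Ps y : simplex_pos n y -> markov_order n Ps y y.
Proof.
  intros Hy. apply markov_order_of_pre; auto.
  exists (fun _ _ => 0). split; [split|].
  - intros. lra.
  - intros i _. unfold rsum_ne. rewrite !rsum_zero; [ring| |]; intros; destruct (Nat.eqb k i); ring.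
  - exists (fun _ => y). split; [|split; intros l _; reflexivity].
    intros i t _. unfold kolmogorov_rhs. rewrite rsum_ne_zero by (intros; ring).
    apply derivable_pt_lim_const.
Qed.

Ltac case_eqb := repeat match goal with
  | |- context [Nat.eqb ?x ?y] => destruct (Nat.eqb_spec x y)
  end; simpl; subst; try congruence; try lra; try ring.

Section TwoState.

(* The two-state chain exchanging mass between a and b with rates
   q_ab = kappa p*_a, q_ba = kappa p*_b, in detailed balance with p*. *)
Variables (n : nat) (Ps : nat -> R) (a b : nat) (kappa : R).
Hypothesis Ps_pos : forall l, (l < n)%nat -> 0 < Ps l.
Hypotheses (Ha : (a < n)%nat) (Hb : (b < n)%nat) (Hab : a <> b) (Hkappa : 0 <= kappa).

Definition two_state_rates (i j : nat) : R :=
  if (Nat.eqb i a && Nat.eqb j b)%bool then kappa * Ps a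
  else if (Nat.eqb i b && Nat.eqb j a)%bool then kappa * Ps b else 0.

Lemma two_state_chain : markov_chain n Ps two_state_rates.
Proof.
  pose proof (Ps_pos a Ha). pose proof (Ps_pos b Hb). unfold two_state_rates. split.
  - intros i j _ _ _. case_eqb; nra.
  - intros i Hi. destruct (Nat.eq_dec i a) as [->|Hia]; [|destruct (Nat.eq_dec i b) as [->|Hib]].
    + rewrite !(rsum_ne_single n a _ b) by (auto || intros; case_eqb). case_eqb.
    + rewrite !(rsum_ne_single n b _ a) by (auto || intros; case_eqb). case_eqb.
    + rewrite !rsum_ne_zero by (intros; case_eqb). ring.
Qed.

Lemma two_state_rhs y c l : (l < n)%nat ->
  kolmogorov_rhs n two_state_rates (fun j => y j + c * gamma b a j) l
  = kappa * ((Ps a * y b - Ps b * y a) - (Ps a + Ps b) * c) * gamma b a l.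
Proof.
  intros Hl. unfold kolmogorov_rhs, two_state_rates.
  destruct (Nat.eq_dec l a) as [->|Hla]; [|destruct (Nat.eq_dec l b) as [->|Hlb]].
  - rewrite (rsum_ne_single n a _ b) by (auto || intros; case_eqb). unfold gamma. case_eqb.
  - rewrite (rsum_ne_single n b _ a) by (auto || intros; case_eqb). unfold gamma. case_eqb.
  - rewrite rsum_ne_zero by (intros; case_eqb). unfold gamma. case_eqb.
Qed.

(* Its explicit solution moves D/s (1 - exp(-kappa s t)) from b to a, with
   D = p*_a y_b - p*_b y_a and s = p*_a + p*_b. *)
Lemma two_state_pre y :
  markov_pre n Ps y (fun l => y l + (Ps a * y b - Ps b * y a) / (Ps a + Ps b)
                                     * (1 - exp (- (kappa * (Ps a + Ps b)) * 1)) * gamma b a l).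
Proof.
  pose proof (Ps_pos a Ha). pose proof (Ps_pos b Hb).
  set (s := Ps a + Ps b). set (D := Ps a * y b - Ps b * y a).
  set (g := fun t => D / s * (1 - exp (- (kappa * s) * t))).
  exists two_state_rates. split; [apply two_state_chain|].
  exists (fun t l => y l + g t * gamma b a l). split; [|split; intros l _].
  - intros l t Hl. rewrite two_state_rhs by auto.
    apply is_derive_Reals. unfold g. auto_derive; [exact I|]. unfold D, s. field. lra.
  - unfold g. rewrite Rmult_0_r, exp_0. ring.
  - reflexivity.
Qed.

End TwoState.

(* Choosing the rate kappa, the two-state chain moves any prescribed amount d of mass
   from b to a, provided d stays below the equilibrium-restoring amount D/s. *)
Lemma two_state_transfer n Ps y a b d :
  (forall l, (l < n)%nat -> 0 < Ps l) -> simplex_pos n y ->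
  (a < n)%nat -> (b < n)%nat -> a <> b -> 0 <= d ->
  d * (Ps a + Ps b) < Ps a * y b - Ps b * y a ->
  markov_order n Ps y (fun l => y l + d * gamma b a l).
Proof.
  intros HPs Hy Ha Hb Hab Hd Hlt. apply markov_order_of_pre; auto.
  pose proof (HPs a Ha). pose proof (HPs b Hb).
  set (s := Ps a + Ps b) in *. set (D := Ps a * y b - Ps b * y a) in *.
  assert (Hs : 0 < s) by (unfold s; lra).
  assert (HD : 0 < D) by nra.
  assert (Hfrac : 0 <= d * s / D < 1).
  { split; [apply Rmult_le_pos; [nra|left; apply Rinv_0_lt_compat; auto]|].
    apply (Rmult_lt_reg_r D); auto. unfold Rdiv. rewrite Rmult_assoc, Rinv_l by lra. lra. }
  set (kappa := - ln (1 - d * s / D) / s).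
  assert (Hkappa : 0 <= kappa).
  { assert (ln (1 - d * s / D) <= 0) by (rewrite <- ln_1; apply ln_le; lra).
    unfold kappa, Rdiv. apply Rmult_le_pos; [lra|left; apply Rinv_0_lt_compat; auto]. }
  assert (Hamount : D / s * (1 - exp (- (kappa * s) * 1)) = d).
  { replace (- (kappa * s) * 1) with (ln (1 - d * s / D)) by (unfold kappa; field; lra).
    rewrite exp_ln by lra. field. split; lra. }
  pose proof (two_state_pre n Ps a b kappa HPs Ha Hb Hab Hkappa y) as Hpre.
  fold s D in Hpre. rewrite Hamount in Hpre. exact Hpre.
Qed.

Lemma finite_pos_lower_bound n (P : nat -> Prop) (g : nat -> R) :
  (forall k, (k < n)%nat -> P k -> 0 < g k) ->
  exists m, 0 < m /\ forall k, (k < n)%nat -> P k -> m <= g k.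
Proof.
  induction n as [|n IH]; intros H.
  - exists 1. split; [lra|]. intros; lia.
  - destruct IH as [m [Hm Hb]]; [intros; apply H; auto; lia|].
    destruct (classic (P n)) as [Pn|Pn].
    + exists (Rmin m (g n)). split; [apply Rmin_glb_lt; auto; apply H; auto|].
      intros k Hk HP. destruct (Nat.eq_dec k n) as [->|]; [apply Rmin_r|].
      eapply Rle_trans; [apply Rmin_l|]. apply Hb; auto; lia.
    + exists m. split; auto. intros k Hk HP. destruct (Nat.eq_dec k n) as [->|]; [contradiction|].
      apply Hb; auto; lia.
Qed.

Lemma finite_pos_lower_bound2 n (P : nat -> nat -> Prop) (g : nat -> nat -> R) :
  (forall a b, (a < n)%nat -> (b < n)%nat -> P a b -> 0 < g a b) ->
  exists m, 0 < m /\ forall a b, (a < n)%nat -> (b < n)%nat -> P a b -> m <= g a b.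
Proof.
  intros H.
  assert (Rows : forall N, (N <= n)%nat -> exists m, 0 < m /\
            forall a b, (a < N)%nat -> (b < n)%nat -> P a b -> m <= g a b).
  { induction N as [|N IH]; intros HN.
    - exists 1. split; [lra|]. intros; lia.
    - destruct (IH ltac:(lia)) as [m [Hm Hb]].
      destruct (finite_pos_lower_bound n (P N) (g N)) as [m' [Hm' Hb']]; [intros; apply H; auto; lia|].
      exists (Rmin m m'). split; [apply Rmin_glb_lt; auto|].
      intros a b Ha Hb2 HP. destruct (Nat.eq_dec a N) as [->|].
      + eapply Rle_trans; [apply Rmin_r|]. apply Hb'; auto.
      + eapply Rle_trans; [apply Rmin_l|]. apply Hb; auto; lia. }
  apply Rows. lia.
Qed.

Section LocalMoves.

Variables (n : nat) (Ps P0 : nat -> R).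
Hypotheses (Ps_pos : forall l, (l < n)%nat -> 0 < Ps l) (P0_pos : forall l, (l < n)%nat -> 0 < P0 l).

Local Notation r := (ratio Ps P0).

Lemma cross_ratio a b : (a < n)%nat -> (b < n)%nat ->
  Ps a * P0 b - Ps b * P0 a = Ps a * Ps b * (r b - r a).
Proof. intros Ha Hb. pose proof (Ps_pos a Ha). pose proof (Ps_pos b Hb). unfold ratio. field. lra. Qed.

Lemma ratio_gap : exists gap, 0 < gap /\ forall a b, (a < n)%nat -> (b < n)%nat -> r a < r b ->
  gap * (Ps a + Ps b) <= Ps a * P0 b - Ps b * P0 a.
Proof.
  destruct (finite_pos_lower_bound2 n (fun a b => r a < r b)
              (fun a b => (Ps a * P0 b - Ps b * P0 a) / (Ps a + Ps b))) as [gap [Hgap Hle]].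
  { intros a b Ha Hb Hr. pose proof (Ps_pos a Ha). pose proof (Ps_pos b Hb).
    rewrite cross_ratio by auto. apply Rdiv_lt_0_compat; [|lra].
    apply Rmult_lt_0_compat; [nra|lra]. }
  exists gap. split; auto. intros a b Ha Hb Hr.
  pose proof (Ps_pos a Ha). pose proof (Ps_pos b Hb). specialize (Hle a b Ha Hb Hr).
  apply (Rmult_le_compat_r (Ps a + Ps b)) in Hle; [|lra].
  replace ((Ps a * P0 b - Ps b * P0 a) / (Ps a + Ps b) * (Ps a + Ps b))
    with (Ps a * P0 b - Ps b * P0 a) in Hle by (field; lra). exact Hle.
Qed.

(* Near P0, every small move of the cone is realised by a two-state chain: the moves
   go from larger to smaller ratio of P0, and this order is stable nearby. *)
Lemma local_moves : exists delta, 0 < delta /\ (forall l, (l < n)%nat -> delta < P0 l) /\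
  forall y, rsum n y = 1 -> (forall l, (l < n)%nat -> Rabs (y l - P0 l) <= delta) ->
  forall j i d, (j < i)%nat -> (i < n)%nat -> 0 <= d <= delta ->
  markov_order n Ps y (fun l => y l + d * sgn (r j - r i) * gamma j i l).
Proof.
  destruct ratio_gap as [gap [Hgap Hgap_le]].
  destruct (finite_pos_lower_bound n (fun _ => True) P0) as [pmin [Hpmin Hpmin_le]];
    [intros; auto|].
  set (delta := Rmin gap pmin / 3).
  assert (Hdelta : 0 < delta) by (apply Rdiv_lt_0_compat; [apply Rmin_glb_lt|]; lra).
  assert (Hdgap : 3 * delta <= gap) by (unfold delta; pose proof (Rmin_l gap pmin); lra).
  assert (Hdp : 3 * delta <= pmin) by (unfold delta; pose proof (Rmin_r gap pmin); lra).
  exists delta. split; [auto|split; [intros l Hl; specialize (Hpmin_le l Hl I); lra|]].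
  intros y Hsum Hnear j i d Hji Hi Hd.
  assert (Hy : simplex_pos n y).
  { split; auto. intros l Hl. specialize (Hnear l Hl). specialize (Hpmin_le l Hl I).
    apply Rabs_le_between in Hnear. lra. }
  assert (Hmove : forall a b, (a < n)%nat -> (b < n)%nat -> r a < r b ->
            markov_order n Ps y (fun l => y l + d * gamma b a l)).
  { intros a b Ha Hb Hr. apply two_state_transfer; auto; [intros ->; lra|lra|].
    specialize (Hgap_le a b Ha Hb Hr).
    pose proof (Ps_pos a Ha). pose proof (Ps_pos b Hb).
    pose proof (proj1 (Rabs_le_between _ _) (Hnear a Ha)).
    pose proof (proj1 (Rabs_le_between _ _) (Hnear b Hb)).
    nra. }
  destruct (Rtotal_order (r j) (r i)) as [Hlt|[Heq|Hgt]].
  - eapply markov_order_ext; [apply (Hmove j i); auto; lia|].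
    intros l. rewrite sgn_neg, gamma_swap by lra. ring.
  - eapply markov_order_ext; [apply markov_order_refl, Hy|].
    intros l. rewrite sgn_zero by lra. ring.
  - eapply markov_order_ext; [apply (Hmove i j); auto; lia|].
    intros l. rewrite sgn_pos by lra. ring.
Qed.

End LocalMoves.

Section BudgetedMoves.

(* Inside a delta-neighbourhood of P0 where every small cone move is a Markov step,
   a mass change v of total size at most s can be performed by a chain of Markov steps
   starting from any distribution whose distance to P0 leaves room for s. *)
Variables (n : nat) (Ps P0 : nat -> R) (delta : R).
Hypothesis delta_small : forall l, (l < n)%nat -> delta < P0 l.
Hypothesis near_moves : forall y, rsum n y = 1 ->
  (forall l, (l < n)%nat -> Rabs (y l - P0 l) <= delta) ->
  forall j i d, (j < i)%nat -> (i < n)%nat -> 0 <= d <= delta ->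
  markov_order n Ps y (fun l => y l + d * sgn (ratio Ps P0 j - ratio Ps P0 i) * gamma j i l).

Definition budgeted (v : nat -> R) (s : R) : Prop :=
  rsum n v = 0 /\ (forall l, (l < n)%nat -> Rabs (v l) <= s) /\
  forall y, rsum n y = 1 -> (forall l, (l < n)%nat -> Rabs (y l - P0 l) + s <= delta) ->
  markov_order n Ps y (fun l => y l + v l).

Lemma near_simplex y : rsum n y = 1 -> (forall l, (l < n)%nat -> Rabs (y l - P0 l) <= delta) ->
  simplex_pos n y.
Proof.
  intros Hsum Hnear. split; auto. intros l Hl.
  pose proof (proj1 (Rabs_le_between _ _) (Hnear l Hl)). pose proof (delta_small l Hl). lra.
Qed.

Lemma budgeted_zero : budgeted (fun _ => 0) 0.
Proof.
  split; [apply rsum_zero; auto|split; [intros; rewrite Rabs_R0; lra|]].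
  intros y Hsum Hnear. eapply markov_order_ext.
  - apply markov_order_refl, near_simplex; auto. intros l Hl. specialize (Hnear l Hl). lra.
  - intros l. ring.
Qed.

Lemma budgeted_add v s w t : budgeted v s -> budgeted w t -> budgeted (fun l => v l + w l) (s + t).
Proof.
  intros [Hv0 [Hvs Hv]] [Hw0 [Hwt Hw]]. split; [|split].
  - rewrite rsum_plus, Hv0, Hw0. ring.
  - intros l Hl. eapply Rle_trans; [apply Rabs_triang|]. apply Rplus_le_compat; auto.
  - intros y Hsum Hnear. eapply markov_order_ext; [eapply markov_order_trans|].
    + apply Hv; auto. intros l Hl.
      specialize (Hnear l Hl). pose proof (Rle_trans _ _ _ (Rabs_pos (w l)) (Hwt l Hl)). lra.
    + apply Hw; [rewrite rsum_plus, Hsum, Hv0; ring|].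
      intros l Hl. specialize (Hnear l Hl). specialize (Hvs l Hl).
      replace (y l + v l - P0 l) with ((y l - P0 l) + v l) by ring.
      pose proof (Rabs_triang (y l - P0 l) (v l)). lra.
    + intros l. simpl. ring.
Qed.

Lemma budgeted_rsum N (f : nat -> nat -> R) (s : nat -> R) :
  (forall k, (k < N)%nat -> budgeted (f k) (s k)) ->
  budgeted (fun l => rsum N (fun k => f k l)) (rsum N s).
Proof.
  induction N as [|N IH]; intros H; simpl; [apply budgeted_zero|].
  apply (budgeted_add (fun l => rsum N (fun k => f k l))); [apply IH; intros; apply H; lia|apply H; lia].
Qed.

Lemma budgeted_move j i d : (j < i)%nat -> (i < n)%nat -> 0 <= d ->
  budgeted (fun l => d * sgn (ratio Ps P0 j - ratio Ps P0 i) * gamma j i l) d.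
Proof.
  intros Hji Hi Hd. split; [|split].
  - rewrite rsum_scal, gamma_sum by lia. ring.
  - intros l _. rewrite !Rabs_mult, (Rabs_right d) by lra.
    assert (Rabs (sgn (ratio Ps P0 j - ratio Ps P0 i)) <= 1)
      by (unfold sgn; repeat destruct Rlt_dec; unfold Rabs; destruct Rcase_abs; lra).
    assert (Rabs (gamma j i l) <= 1)
      by (unfold gamma; destruct (Nat.eqb l i), (Nat.eqb l j); unfold Rabs; destruct Rcase_abs; lra).
    apply Rle_trans with (d * 1 * 1); [|lra].
    apply Rmult_le_compat; try apply Rmult_le_compat; auto using Rabs_pos, Rle_refl, Rmult_le_pos.
  - intros y Hsum Hnear. apply near_moves; auto.
    + intros l Hl. specialize (Hnear l Hl). lra.
    + specialize (Hnear i Hi). pose proof (Rabs_pos (y i - P0 i)). lra.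
Qed.

Lemma budgeted_cone (c : nat -> nat -> R) :
  (forall j i, (j < i)%nat -> (i < n)%nat -> 0 <= c j i) ->
  budgeted (fun l => rsum n (fun i => rsum i (fun j =>
              c j i * sgn (ratio Ps P0 j - ratio Ps P0 i) * gamma j i l)))
           (rsum n (fun i => rsum i (fun j => c j i))).
Proof.
  intros Hc.
  apply (budgeted_rsum n (fun i l => rsum i (fun j =>
           c j i * sgn (ratio Ps P0 j - ratio Ps P0 i) * gamma j i l))).
  intros i Hi.
  apply (budgeted_rsum i (fun j l => c j i * sgn (ratio Ps P0 j - ratio Ps P0 i) * gamma j i l)).
  intros j Hj. apply budgeted_move; auto.
Qed.

End BudgetedMoves.

Lemma inL_affine n k m M x z w t : inL n k m M x -> inL n k m M z ->
  (forall l, (l < n)%nat -> w l = x l + t * (z l - x l)) -> inL n k m M w.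
Proof.
  intros Hx Hz Hw r Hr.
  rewrite (rsum_ext n _ (fun j => m r j * x j + t * (m r j * z j - m r j * x j)))
    by (intros; rewrite Hw by auto; ring).
  rewrite rsum_plus, rsum_scal, rsum_minus, Hx, Hz by auto. ring.
Qed.

(* Minimality => cone condition: a small multiple of any cone move from P0 is
   reachable by Markov steps, so it must vanish if it stays in L. *)
Lemma minimal_cone_condition n Ps k m M P0 :
  simplex_pos n Ps -> simplex_pos n P0 -> inL n k m M P0 ->
  (forall P1, simplex_pos n P1 -> inL n k m M P1 -> markov_order n Ps P0 P1 -> veq n P1 P0) ->
  forall P, in_P0_plus_Q n Ps P0 P -> inL n k m M P -> veq n P P0.
Proof.
  intros [HPs _] [HP0 HP01] HL0 Hmin P [c [Hc HP]] HL.
  destruct (local_moves n Ps P0 HPs HP0) as [delta [Hdelta [Hsmall Hmoves]]].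
  set (C := rsum n (fun i => rsum i (fun j => c j i))).
  assert (HC : 0 <= C) by (apply rsum_nonneg; intros; apply rsum_nonneg; intros; apply Hc; lia).
  set (eps := delta / (C + 1)).
  assert (Heps : 0 < eps) by (apply Rdiv_lt_0_compat; lra).
  assert (HepsC : eps * C <= delta).
  { unfold eps. apply (Rmult_le_reg_r (C + 1)); [lra|].
    replace (delta / (C + 1) * C * (C + 1)) with (delta * C) by (field; lra). nra. }
  set (V := fun l => rsum n (fun i => rsum i (fun j =>
              eps * c j i * sgn (ratio Ps P0 j - ratio Ps P0 i) * gamma j i l))).
  assert (HV : budgeted n Ps P0 delta V (eps * C)).
  { replace (eps * C) with (rsum n (fun i => rsum i (fun j => eps * c j i)))
      by (unfold C; rewrite <- rsum_scal; apply rsum_ext; intros; apply rsum_scal).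
    apply budgeted_cone; auto. intros j i Hji Hi. apply Rmult_le_pos; [lra|auto]. }
  assert (HVl : forall l, (l < n)%nat -> V l = eps * (P l - P0 l)).
  { intros l Hl. rewrite HP by auto.
    match goal with |- _ = eps * (P0 l + ?S - P0 l) => replace (P0 l + S - P0 l) with S by ring end.
    unfold V.
    rewrite <- rsum_scal. apply rsum_ext. intros i _. rewrite <- rsum_scal.
    apply rsum_ext. intros j _. unfold ratio. ring. }
  destruct HV as [HV0 [HVbound HVmove]].
  assert (Hnear : forall l, (l < n)%nat -> Rabs (P0 l + V l - P0 l) <= delta).
  { intros l Hl. replace (P0 l + V l - P0 l) with (V l) by ring.
    specialize (HVbound l Hl). lra. }
  assert (Hsame : veq n (fun l => P0 l + V l) P0).
  { apply Hmin.
    - apply (near_simplex n P0 delta Hsmall); auto. rewrite rsum_plus, HP01, HV0. ring.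
    - apply (inL_affine n k m M P0 P _ eps HL0 HL). intros l Hl. rewrite HVl; auto.
    - apply HVmove; auto. intros l Hl. rewrite Rminus_diag, Rabs_R0. lra. }
  intros l Hl. specialize (Hsame l Hl). cbv beta in Hsame. rewrite HVl in Hsame by auto.
  apply Rminus_diag_uniq, (Rmult_eq_reg_l eps); lra.
Qed.

(* Cone condition => minimality: whatever P0 dominates in the Markov order is
   dominated for all excess functionals, hence differs from P0 by a cone vector. *)
Lemma cone_condition_minimal n Ps k m M P0 :
  simplex_pos n Ps -> simplex_pos n P0 ->
  (forall P, in_P0_plus_Q n Ps P0 P -> inL n k m M P -> veq n P P0) ->
  forall P1, simplex_pos n P1 -> inL n k m M P1 -> markov_order n Ps P0 P1 -> veq n P1 P0.
Proof.
  intros HPs [_ HP01] Hcone P1 [_ HP11] HL1 Horder.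
  assert (Hdown : downhill n (ratio Ps P0) (fun l => P1 l - P0 l))
    by (apply excess_dominated_downhill, markov_order_excess; auto).
  destruct (downhill_in_cone n _ _ Hdown) as [c [Hc Hv]].
  apply Hcone; auto. exists c. split; auto.
  intros l Hl. unfold ratio in Hv. rewrite <- (Hv l Hl). ring.
Qed.

Theorem corollary1 (n : nat) (Ps : nat -> R) (k : nat) (m : nat -> nat -> R)
    (M : nat -> R) (P0 : nat -> R) :
  (2 <= n)%nat ->
  simplex_pos n Ps ->
  (forall j, (j < n)%nat -> m 0%nat j = 1) -> M 0%nat = 1 ->
  (exists P, simplex_pos n P /\ inL n k m M P) ->
  simplex_pos n P0 -> inL n k m M P0 ->
  ((forall P1, simplex_pos n P1 -> inL n k m M P1 ->
      markov_order n Ps P0 P1 -> veq n P1 P0)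
   <->
   (forall P, in_P0_plus_Q n Ps P0 P -> inL n k m M P -> veq n P P0)).
Proof.
  intros _ HPs _ _ _ HP0 HL0. split.
  - apply minimal_cone_condition; auto.
  - apply cone_condition_minimal; auto.
Qed.
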